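(* If a CSS code $(H_X,H_Z)$ is phantom, then for every CSS logical basis $(L_X,L_Z)$ of that code and every ordered pair $(a,b)\in[k]^2$ with $a\ne b$, there exists a permutation $\pi\in S_n$ that implements $I_k+E_{ab}$ in the basis $(L_X,L_Z)$.
   Context: Conventions. All arithmetic is over $\mathbb F_2$; vectors are row vectors; $|v|$ is the Hamming weight; $\mathrm{rs}(M)$ is the row space of $M$ and $\ker M=\{v: Mv^T=0\}$; $E_{ab}\in\mathbb F_2^{k\times k}$ is the matrix unit with a single $1$ in position $(a,b)$; $A^{-T}=(A^{-1})^T$. A CSS code on $n$ qubits is specified by $H_X\in\mathbb F_2^{r_X\times n}$, $H_Z\in\mathbb F_2^{r_Z\times n}$ with $H_XH_Z^T=0$; it has $k=n-\operatorname{rank}H_X-\operatorname{rank}H_Z$ logical qubits, $X$-distance $d_X=\min\{|v|:v\in\ker H_Z\setminus\mathrm{rs}(H_X)\}$, $Z$-distance $d_Z=\min\{|v|:v\in\ker H_X\setminus\mathrm{rs}(H_Z)\}$, and distance $d=\min(d_X,d_Z)$. A CSS logical basis is a pair $L_X,L_Z\in\mathbb F_2^{k\times n}$ with rows of $L_X$ in $\ker H_Z$, rows of $L_Z$ in $\ker H_X$, and $L_XL_Z^T=I_k$. For a permutation $\pi\in S_n$ with permutation matrix $P$ (so $v\mapsto vP$ permutes coordinates) and $A\in GL(k,\mathbb F_2)$, $\pi$ implements the logical CNOT circuit $A$ in the basis $(L_X,L_Z)$ if $\mathrm{rs}(H_XP)=\mathrm{rs}(H_X)$, $\mathrm{rs}(H_ZP)=\mathrm{rs}(H_Z)$,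 every row of $L_XP-AL_X$ lies in $\mathrm{rs}(H_X)$, and every row of $L_ZP-A^{-T}L_Z$ lies in $\mathrm{rs}(H_Z)$. The logical $\mathrm{CNOT}_{ab}$ ($a\neq b$) corresponds to $A=I_k+E_{ab}$. The CSS code is phantom if there is a CSS logical basis in which, for every ordered pair $(a,b)\in[k]^2$ with $a\neq b$, some permutation implements $I_k+E_{ab}$. *)

From mathcomp Require Import all_boot all_algebra all_fingroup.
Set Implicit Arguments. Unset Strict Implicit. Unset Printing Implicit Defensive.
Import GRing.Theory.
Local Open Scope ring_scope.

(* All matrices are over F_2 = 'F_2; vectors are rows; the permutation matrix
   of s : 'S_n is perm_mx s and v |-> v *m perm_mx s permutes coordinates. *)

Section CSS.
Variables (rX rZ n : nat).
Implicit Types (HX : 'M['F_2]_(rX, n)) (HZ : 'M['F_2]_(rZ, n)).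

Definition css_code HX HZ : Prop := HX *m HZ^T = 0.

Definition css_k HX HZ : nat := (n - \rank HX - \rank HZ)%N.

Definition css_logical_basis HX HZ (LX LZ : 'M['F_2]_(css_k HX HZ, n)) : Prop :=
  [/\ LX *m HZ^T = 0, LZ *m HX^T = 0 & LX *m LZ^T = 1%:M].

Definition cnot_mx (k : nat) (a b : 'I_k) : 'M['F_2]_k := 1%:M + delta_mx a b.

Definition implements HX HZ (LX LZ : 'M['F_2]_(css_k HX HZ, n))
    (s : 'S_n) (A : 'M['F_2]_(css_k HX HZ)) : Prop :=
  let P := perm_mx s in
  [/\ (HX *m P == HX)%MS, (HZ *m P == HZ)%MS,
      (LX *m P - A *m LX <= HX)%MS
    & (LZ *m P - (invmx A)^T *m LZ <= HZ)%MS].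

Definition phantom_code HX HZ : Prop :=
  exists LX LZ : 'M['F_2]_(css_k HX HZ, n),
    css_logical_basis LX LZ /\
    forall a b : 'I_(css_k HX HZ), a != b ->
      exists s : 'S_n, implements LX LZ s (cnot_mx a b).

End CSS.

(* Two CSS logical bases differ by some B in GL(k) modulo stabilizers:
   L_X = B L_X0 + M H_X and L_Z = B^-T L_Z0 + N H_Z. A permutation implementing
   A0 in the phantom basis (L_X0, L_Z0) therefore implements B A0 B^-1 in
   (L_X, L_Z), so it suffices that B^-1 CNOT_ab B be implementable in the
   phantom basis. That matrix is the transvection I + u w with u = B^-1 e_a,
   w = e_b^T B and w u = 0. Over F_2 every such transvection is a product of
   CNOTs: conjugating by CNOTs reduces u to a unit vector e_i, and I + e_i w is
   the product of the CNOT_ij for j in the support of w. Finally, circuits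
   implementable by permutations are closed under products. *)

From mathcomp Require Import all_boot all_algebra all_fingroup.
From mathcomp Require Import zify.
Set Implicit Arguments. Unset Strict Implicit. Unset Printing Implicit Defensive.
Import GRing.Theory.
Local Open Scope ring_scope.

Lemma pchar_F2 : 2 \in [pchar 'F_2]. Proof. exact: pchar_Fp. Qed.

Lemma F2_neq0 (x : 'F_2) : x != 0 -> x = 1.
Proof. by case: x => [[|[|//]]] // ? _; apply: val_inj. Qed.

Lemma oppmx_F2 m n (A : 'M['F_2]_(m, n)) : - A = A.
Proof. by apply/matrixP => i j; rewrite mxE (oppr_pchar2 pchar_F2). Qed.

Definition mxsupport (R : zmodType) m n (A : 'M[R]_(m, n)) : {set 'I_m * 'I_n} :=
  [set ij | A ij.1 ij.2 != 0].

Lemma card_mxsupport_subdelta m n (A : 'M['F_2]_(m, n)) i j :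
  A i j != 0 -> (#|mxsupport (A - delta_mx i j)| < #|mxsupport A|)%N.
Proof.
move=> Aij; apply: proper_card; apply/properP; split.
  apply/subsetP => -[x y]; rewrite !inE !mxE /=.
  by case: (x =P i) => [->|_]; case: (y =P j) => [->|_]; rewrite ?subr0.
by exists (i, j); rewrite !inE ?Aij // !mxE !eqxx (F2_neq0 Aij) subrr eqxx.
Qed.

Section Transvection.
Variables (R : pzRingType) (k : nat).
Implicit Types (u : 'cV[R]_k) (w : 'rV[R]_k).

Definition transvection u w : 'M[R]_k := 1%:M + u *m w.

Lemma transvection0l w : transvection 0 w = 1%:M.
Proof. by rewrite /transvection mul0mx addr0. Qed.

Lemma transvection0r u : transvection u 0 = 1%:M.
Proof. by rewrite /transvection mulmx0 addr0. Qed.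

Lemma transvectionDr u w1 w2 : w1 *m u = 0 ->
  transvection u (w1 + w2) = transvection u w1 *m transvection u w2.
Proof.
move=> w1u; rewrite /transvection mulmxDl !mulmxDr !mul1mx mulmx1.
by rewrite !mulmxA -(mulmxA u w1) w1u mulmx0 mul0mx addr0 addrA addrAC.
Qed.

Lemma transvection_conj (Y X : 'M[R]_k) u w : Y *m X = 1%:M ->
  Y *m transvection u w *m X = transvection (Y *m u) (w *m X).
Proof. by move=> YX; rewrite /transvection mulmxDr mulmx1 mulmxDl YX !mulmxA. Qed.

End Transvection.

Lemma cnot_mxE k (i j : 'I_k) :
  cnot_mx i j = transvection (delta_mx i 0) (delta_mx 0 j).
Proof. by rewrite /transvection mul_delta_mx. Qed.

Lemma cnot_mxK k (i j : 'I_k) : i != j -> cnot_mx i j *m cnot_mx i j = 1%:M.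
Proof.
move=> ij; rewrite cnot_mxE -transvectionDr ?mul_delta_mx_0 1?eq_sym //.
by rewrite -[X in X + _]oppmx_F2 addNr transvection0r.
Qed.

Lemma cnot_mx_unit k (i j : 'I_k) : i != j -> cnot_mx i j \in unitmx.
Proof. by move/cnot_mxK/mulmx1_unit=> []. Qed.

Section CnotGeneration.
Variables (k : nat) (G : 'M['F_2]_k -> Prop).
Hypotheses (G1 : G 1%:M) (GM : forall A B, G A -> G B -> G (A *m B)).
Hypothesis G_cnot : forall i j : 'I_k, i != j -> G (cnot_mx i j).

Lemma cnot_closed_transvection_delta (i : 'I_k) (w : 'rV_k) :
  w 0 i = 0 -> G (transvection (delta_mx i 0) w).
Proof.
have [m] := ubnP #|mxsupport w|; elim: m w => // m IH w lt_w_m wi0.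
have [->|/matrix0Pn[z [j wj]]] := eqVneq w 0; first by rewrite transvection0r.
rewrite (ord1 z) in wj.
have ji : j != i by apply: contraNneq wj => ->; rewrite wi0.
rewrite -(subrK (delta_mx 0 j) w) addrC transvectionDr ?mul_delta_mx_0 //.
apply: GM; first by rewrite -cnot_mxE; apply: G_cnot; rewrite eq_sym.
apply: IH; first exact: leq_trans (card_mxsupport_subdelta wj) _.
by rewrite !mxE eqxx eq_sym (negbTE ji) subr0.
Qed.

Lemma cnot_closed_transvection (u : 'cV_k) (w : 'rV_k) :
  w *m u = 0 -> G (transvection u w).
Proof.
have [m] := ubnP #|mxsupport u|; elim: m u w => // m IH u w lt_u_m wu0.
have [->|/matrix0Pn[i [z ui]]] := eqVneq u 0; first by rewrite transvection0l.
rewrite (ord1 z) in ui.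
have [u_i|/matrix0Pn[j [z' uj]]] := eqVneq (u - delta_mx i 0) 0.
  rewrite (subr0_eq u_i) in wu0 *; apply: cnot_closed_transvection_delta.
  by move/matrixP/(_ 0 0): wu0; rewrite -colE !mxE.
rewrite (ord1 z') !mxE eqxx andbT in uj.
have ji : j != i by apply: contraNneq uj => ->; rewrite eqxx (F2_neq0 ui) subrr.
rewrite (negbTE ji) subr0 in uj.
(* Conjugating by CNOT_ji clears the entry j of u. *)
set c := cnot_mx j i; have cc : c *m c = 1%:M by apply: cnot_mxK.
have cu : c *m u = u - delta_mx j 0.
  rewrite /c /cnot_mx mulmxDl mul1mx oppmx_F2; congr (_ + _).
  rewrite -(mul_delta_mx (0 : 'I_1)) -mulmxA -rowE.
  suff -> : row i u = 1%:M by rewrite mulmx1.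
  by apply/matrixP => x y; rewrite (ord1 x) (ord1 y) !mxE (F2_neq0 ui).
have -> : transvection u w = c *m transvection (c *m u) (w *m c) *m c.
  by rewrite transvection_conj // mulmxA cc mul1mx -mulmxA cc mulmx1.
apply: GM; first apply: GM; [exact: G_cnot| |exact: G_cnot].
apply: IH; first by rewrite cu; exact: leq_trans (card_mxsupport_subdelta uj) _.
by rewrite -mulmxA (mulmxA c) cc mul1mx.
Qed.

End CnotGeneration.

Section ActionModulo.
Variables (F : fieldType) (r n k : nat) (H : 'M[F]_(r, n)).
Implicit Types (L : 'M[F]_(k, n)) (P : 'M[F]_n) (A X : 'M[F]_k).

Definition acts_mod L P A := (L *m P - A *m L <= H)%MS.

Lemma acts_modM L P1 P2 A1 A2 : (H *m P2 <= H)%MS ->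
  acts_mod L P1 A1 -> acts_mod L P2 A2 -> acts_mod L (P1 *m P2) (A1 *m A2).
Proof.
move=> HP2 act1 act2; rewrite /acts_mod.
have -> : L *m (P1 *m P2) - A1 *m A2 *m L =
          (L *m P1 - A1 *m L) *m P2 + A1 *m (L *m P2 - A2 *m L).
  by rewrite mulmxBl mulmxBr !mulmxA addrA subrK.
apply: addmx_sub; last exact: mulmx_sub.
exact: submx_trans (submxMr P2 act1) HP2.
Qed.

Lemma acts_mod_transfer L0 L P X A0 A : (H *m P <= H)%MS ->
  (L - X *m L0 <= H)%MS -> acts_mod L0 P A0 -> A *m X = X *m A0 ->
  acts_mod L P A.
Proof.
move=> HP; set Y := L - X *m L0 => HY act0 AX; rewrite /acts_mod.
have -> : L = X *m L0 + Y by rewrite /Y addrC subrK.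
clearbody Y.
have -> : (X *m L0 + Y) *m P - A *m (X *m L0 + Y) =
          X *m (L0 *m P - A0 *m L0) + (Y *m P - A *m Y).
  by rewrite mulmxDl mulmxDr mulmxBr !mulmxA AX opprD addrACA.
apply: addmx_sub; first exact: mulmx_sub.
apply: addmx_sub; last by rewrite eqmx_opp mulmx_sub.
exact: submx_trans (submxMr P HY) HP.
Qed.

End ActionModulo.

Lemma invmxM (R : comUnitRingType) k (A B : 'M[R]_k) :
  A \in unitmx -> B \in unitmx -> invmx (A *m B) = invmx B *m invmx A.
Proof.
move=> uA uB; have uAB : A *m B \in unitmx by rewrite unitmx_mul uA uB.
have BAAB : invmx B *m invmx A *m (A *m B) = 1%:M.
  by rewrite -mulmxA (mulmxA (invmx A)) mulVmx // mul1mx mulVmx.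
by rewrite -[LHS]mul1mx -BAAB mulmxK.
Qed.

Lemma kermx_sub_logical (F : fieldType) r1 r2 n k (H1 : 'M[F]_(r1, n))
    (H2 : 'M[F]_(r2, n)) (L1 L2 : 'M[F]_(k, n)) :
  H1 *m H2^T = 0 -> L1 *m H2^T = 0 -> L2 *m H1^T = 0 -> L1 *m L2^T = 1%:M ->
  k = (n - \rank H1 - \rank H2)%N -> (kermx H2^T <= L1 + H1)%MS.
Proof.
move=> H12 L1H2 L2H1 L12 def_k.
(* L1 meets H1 trivially, so L1 + H1 already has the dimension of the kernel. *)
have capL1H1 : (L1 :&: H1)%MS = 0.
  have [c def_c] := submxP (capmxSl L1 H1).
  have [d def_d] := submxP (capmxSr L1 H1).
  have : (L1 :&: H1)%MS *m L2^T = 0.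
    by rewrite {1}def_d -mulmxA -(trmxK H1) -trmx_mul L2H1 trmx0 mulmx0.
  by rewrite {1}def_c -mulmxA L12 mulmx1 => c0; rewrite def_c c0 mul0mx.
have rankL1 : \rank L1 = k.
  apply/eqP; rewrite eqn_leq rank_leq_row -{1}(mxrank1 F k) -L12.
  exact: mxrankM_maxl.
have sumL1H1 : \rank (L1 + H1)%MS = (k + \rank H1)%N.
  by have := mxrank_sum_cap L1 H1; rewrite capL1H1 mxrank0 addn0 rankL1.
have L1H1_ker : (L1 + H1 <= kermx H2^T)%MS.
  by rewrite addsmx_sub; apply/andP; split; apply/sub_kermxP.
have rank_ker : \rank (kermx H2^T) = (n - \rank H2)%N.
  by rewrite mxrank_ker mxrank_tr.
rewrite -(mxrank_leqif_sup L1H1_ker).2 sumL1H1 rank_ker; apply/eqP.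
by have := mxrankS L1H1_ker; rewrite sumL1H1 rank_ker; lia.
Qed.

Section CSSLogicalOperators.
Variables (rX rZ n : nat) (HX : 'M['F_2]_(rX, n)) (HZ : 'M['F_2]_(rZ, n)).
Local Notation k := (css_k HX HZ).
Implicit Types (LX LZ : 'M['F_2]_(k, n)) (A B : 'M['F_2]_k) (s : 'S_n).

Lemma css_logical_basis_change LX0 LZ0 LX LZ :
  css_code HX HZ -> css_logical_basis LX0 LZ0 -> css_logical_basis LX LZ ->
  exists2 B, B \in unitmx &
    (LX - B *m LX0 <= HX)%MS /\ (LZ - (invmx B)^T *m LZ0 <= HZ)%MS.
Proof.
move=> css [X0HZ Z0HX XZ0] [XHZ ZHX XZ].
have ZX0 : LZ0 *m LX0^T = 1%:M by rewrite -[LHS]trmxK trmx_mul trmxK XZ0 trmx1.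
have HZX : HZ *m HX^T = 0 by rewrite -[LHS]trmxK trmx_mul trmxK css trmx0.
have HXZ0 : HX *m LZ0^T = 0 by rewrite -[LHS]trmxK trmx_mul trmxK Z0HX trmx0.
have /sub_addsmxP[[B M] /= defX] : (LX <= LX0 + HX)%MS.
  apply: submx_trans _ (kermx_sub_logical css X0HZ Z0HX XZ0 _) => //.
  exact/sub_kermxP.
have /sub_addsmxP[[C N] /= defZ] : (LZ <= LZ0 + HZ)%MS.
  apply: submx_trans _ (kermx_sub_logical HZX Z0HX X0HZ ZX0 _).
    exact/sub_kermxP.
  by rewrite /css_k subnAC.
have BC : B *m C^T = 1%:M.
  rewrite -XZ defX defZ linearD /= !trmx_mul mulmxDl !mulmxDr !mulmxA.
  rewrite -!(mulmxA B LX0) -!(mulmxA M HX) XZ0 X0HZ HXZ0 (css : HX *m HZ^T = 0).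
  by rewrite !(mulmx0, mul0mx) mulmx1 !addr0.
have [uB _] := mulmx1_unit BC.
have CT : C^T = invmx B by rewrite -[LHS]mul1mx -(mulVmx uB) -mulmxA BC mulmx1.
exists B => //; rewrite -CT trmxK defX defZ.
by split; rewrite addrC addKr submxMl.
Qed.

Lemma implements1 LX LZ : implements LX LZ 1%g 1%:M.
Proof.
rewrite /implements perm_mx1 !mulmx1 !mul1mx invmx1 trmx1 mul1mx !subrr.
by split; rewrite ?sub0mx //; apply/eqmxP.
Qed.

Lemma implementsM LX LZ s1 s2 A1 A2 : A1 \in unitmx -> A2 \in unitmx ->
  implements LX LZ s1 A1 -> implements LX LZ s2 A2 ->
  implements LX LZ (s1 * s2)%g (A1 *m A2).
Proof.
move=> uA1 uA2 [X1 Z1 actX1 actZ1] [X2 Z2 actX2 actZ2].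
rewrite /implements perm_mxM !mulmxA; split.
- exact/eqmxP/(eqmx_trans (eqmxMr _ (eqmxP X1)) (eqmxP X2)).
- exact/eqmxP/(eqmx_trans (eqmxMr _ (eqmxP Z1)) (eqmxP Z2)).
- by rewrite -mulmxA; apply: acts_modM actX1 actX2; case/andP: X2.
rewrite -mulmxA invmxM // trmx_mul.
by apply: acts_modM actZ1 actZ2; case/andP: Z2.
Qed.

Lemma implements_basis_change LX0 LZ0 LX LZ B A0 A s :
  B \in unitmx -> A0 \in unitmx -> A \in unitmx ->
  (LX - B *m LX0 <= HX)%MS -> (LZ - (invmx B)^T *m LZ0 <= HZ)%MS ->
  A *m B = B *m A0 -> implements LX0 LZ0 s A0 -> implements LX LZ s A.
Proof.
move=> uB uA0 uA defX defZ AB [X Z actX actZ]; split => //.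
  by apply: acts_mod_transfer defX actX AB; case/andP: X.
apply: acts_mod_transfer defZ actZ _; first by case/andP: Z.
by rewrite -!trmx_mul -!invmxM // AB.
Qed.

Definition implementable LX LZ A := A \in unitmx /\ exists s, implements LX LZ s A.

Lemma implementable1 LX LZ : implementable LX LZ 1%:M.
Proof. by split; [exact: unitmx1 | exists 1%g; exact: implements1]. Qed.

Lemma implementableM LX LZ A1 A2 :
  implementable LX LZ A1 -> implementable LX LZ A2 ->
  implementable LX LZ (A1 *m A2).
Proof.
move=> [uA1 [s1 impl1]] [uA2 [s2 impl2]].
by split; [rewrite unitmx_mul uA1 | exists (s1 * s2)%g; exact: implementsM].
Qed.

End CSSLogicalOperators.

Theorem mainTheorem6 (rX rZ n : nat)
    (HX : 'M['F_2]_(rX, n)) (HZ : 'M['F_2]_(rZ, n)) :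
  css_code HX HZ ->
  phantom_code HX HZ ->
  forall LX LZ : 'M['F_2]_(css_k HX HZ, n),
    css_logical_basis LX LZ ->
    forall a b : 'I_(css_k HX HZ), a != b ->
      exists s : 'S_n, implements LX LZ s (cnot_mx a b).
Proof.
move=> css [LX0 [LZ0 [basis0 cnot0]]] LX LZ basis a b ab.
have [B uB [defX defZ]] := css_logical_basis_change css basis0 basis.
have cnot_impl i j : i != j -> implementable LX0 LZ0 (cnot_mx i j).
  by move=> ij; split; [exact: cnot_mx_unit | exact: cnot0].
have [uA0 [s impl0]] : implementable LX0 LZ0 (invmx B *m cnot_mx a b *m B).
  rewrite cnot_mxE transvection_conj ?mulVmx //.
  apply: cnot_closed_transvection (implementable1 LX0 LZ0) _ cnot_impl _ _ _.
    exact: implementableM.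
  by rewrite mulmxA mulmxK // mul_delta_mx_0 // eq_sym.
exists s; apply: (implements_basis_change uB uA0 (cnot_mx_unit ab) defX defZ)
  impl0.
by rewrite !mulmxA mulmxV // mul1mx.
Qed.
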